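(* Let $\mathbf{k}$ be a field, $p\ge3$ an integer, $S=\mathbf{k}[e_1,\dots,e_{2p}]$ standard graded, and let $I$ be the ideal generated by the $3\times3$ minors of $$\begin{pmatrix} 1 & e_1 & 0 & e_2 & 0 & \cdots & e_{p-1} & 0\\ e_p & e_{p+1} & e_1 & e_{p+2} & e_2 & \cdots & e_{2p-1} & e_{p-1}\\ e_{2p} & 0 & e_{p+1} & 0 & e_{p+2} & \cdots & 0 & e_{2p-1}\end{pmatrix}.$$ Let $I'=\langle\mathrm{in}(f):f\in I\rangle$, where $\mathrm{in}(f)$ is the lowest-degree homogeneous component of $f\neq0$. Then $$I'=\mathcal{I}_2\begin{pmatrix} e_1 & e_2 & \cdots & e_{p-1}\\ e_{p+1} & e_{p+2} & \cdots & e_{2p-1}\end{pmatrix}+\langle e_{p+1},e_{p+2},\dots,e_{2p-1}\rangle^2.$$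
   Context: $\mathcal{I}_2(\cdot)$ denotes the ideal generated by the $2\times 2$ minors of a matrix. *)

From HB Require Import structures.
From mathcomp Require Import all_boot all_order all_algebra.
From mathcomp Require Import mpoly.
Set Implicit Arguments. Unset Strict Implicit. Unset Printing Implicit Defensive.
Import Order.TTheory GRing.Theory.
Local Open Scope ring_scope.

Section Ideals.
Variables (K : fieldType) (n : nat).
Local Notation P := {mpoly K[n]}.

Definition ideal_gen (S : P -> Prop) : P -> Prop :=
  fun h => exists (k : nat) (c g : 'I_k -> P),
    (forall i, S (g i)) /\ h = \sum_(i < k) c i * g i.

Definition ideal_add (I J : P -> Prop) : P -> Prop :=
  ideal_gen (fun h => I h \/ J h).

Definition ideal_mul (I J : P -> Prop) : P -> Prop :=
  ideal_gen (fun h => exists a b, [/\ I a, J b & h = a * b]).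

Definition ideal_eq (I J : P -> Prop) : Prop := forall h, I h <-> J h.

Definition minors_ideal (t r c : nat) (A : 'M[P]_(r, c)) : P -> Prop :=
  ideal_gen (fun h => exists (f : 'I_t -> 'I_r) (g : 'I_t -> 'I_c),
    [/\ {homo f : i j / (i < j)%N >-> (i < j)%N},
        {homo g : i j / (i < j)%N >-> (i < j)%N} &
        h = \det (mxsub f g A)]).

(* lowest degree occurring in f (meaningful for f != 0) *)
Definition lowdeg (f : P) : nat :=
  \big[minn/msize f]_(m <- msupp f) mdeg m.

Definition initf (f : P) : P := pihomog mdeg (lowdeg f) f.

Definition initial_ideal (I : P -> Prop) : P -> Prop :=
  ideal_gen (fun h => exists f, [/\ I f, f != 0 & h = initf f]).

(* the variable e_k, k = 1..n (e_k := 'X_(k-1)); 0 if k is out of range *)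
Definition e (k : nat) : P := if insub k.-1 is Some i then 'X_i else 0.

End Ideals.

(* The 3 x (2p-1) matrix of the statement, in {mpoly K[2p]}:
   column 0 is (1, e_p, e_2p); for t = 1..p-1, column 2t-1 is
   (e_t, e_{p+t}, 0) and column 2t is (0, e_t, e_{p+t}). *)
Definition Mcol (K : fieldType) (p : nat) (i : 'I_3) (j : nat) : {mpoly K[2 * p]} :=
  let e := @e K (2 * p)%N in
  if j == 0%N then
    (if val i == 0%N then 1 else if val i == 1%N then e p else e (2 * p)%N)
  else if odd j then
    (let t := j.+1./2 in
     if val i == 0%N then e t else if val i == 1%N then e (p + t)%N else 0)
  else
    (let t := j./2 in
     if val i == 0%N then 0 else if val i == 1%N then e t else e (p + t)%N).

Definition bigM (K : fieldType) (p : nat) : 'M[{mpoly K[2 * p]}]_(3, (2 * p).-1) :=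
  \matrix_(i < 3, j < (2 * p).-1) Mcol K p i j.

Definition smallN (K : fieldType) (p : nat) : 'M[{mpoly K[2 * p]}]_(2, p.-1) :=
  \matrix_(i < 2, j < p.-1)
    (if val i == 0%N then @e K (2 * p)%N j.+1 else @e K (2 * p)%N (p + j.+1)%N).

Definition linideal (K : fieldType) (p : nat) : {mpoly K[2 * p]} -> Prop :=
  ideal_gen (fun h => exists j : 'I_p.-1, h = @e K (2 * p)%N (p + j.+1)%N).

Arguments Mcol : clear implicits.
Arguments bigM : clear implicits.
Arguments smallN : clear implicits.
Arguments linideal : clear implicits.

From HB Require Import structures.
From mathcomp Require Import all_boot all_order all_algebra.
From mathcomp Require Import mpoly.
From mathcomp Require Import zify ring.
Set Implicit Arguments. Unset Strict Implicit. Unset Printing Implicit Defensive.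
Import Order.TTheory GRing.Theory.
Local Open Scope ring_scope.

(* Write x_s = e_(s+1), y_s = e_(p+s+1) for s < p-1, a = e_p, b = e_2p, and let I2 be the
   ideal of the 2 x 2 minors x_s y_t - x_t y_s.  Subtracting a and b times the first row from
   the other two, the 3 x 3 minors become combinations of the 2 x 2 minors of the two reduced
   rows; on odd/even columns these are b (x_s y_t - x_t y_s), x_s y_t - x_t y_s and the mixed
   minors y_s y_t - a x_s y_t + b x_s x_t.  So I = I2 + (mixed minors).
   I2 is the kernel of the monomial map x_s |-> w_s l, y_s |-> w_s m, a |-> a', b |-> b': a
   binomial in the kernel is reduced modulo I2 by exchanging x_t y_s for x_s y_t.  This map
   sends sum d_st y_s y_t to m^2 W and sum d_st (b x_s x_t - a x_s y_t) to (b' l^2 - a' l m) W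
   for the same W, so the cubic part of a combination of mixed minors lies in I2 as soon as
   its quadratic part does.  Writing f in I as g + sum d_st h_st with g in I2 and moving the
   lowest-degree parts of the d_st into g as long as they cancel, one reaches a representation
   exhibiting in(f) in I2 + (y)^2.  Conversely, the minors on the columns 0, 2s+2, 2t+2 and
   0, 2s+1, 2t+2 have initial forms x_s y_t - x_t y_s and y_s y_t. *)

(** * Ideals of a polynomial ring *)

Section Ideals.
Variables (K : fieldType) (n : nat).
Local Notation P := {mpoly K[n]}.
Implicit Types (S : P -> Prop) (I : P -> Prop).

Definition is_ideal I :=
  [/\ I 0, forall a b, I a -> I b -> I (a + b) & forall r a, I a -> I (r * a)].

Lemma ideal_gen_ideal S : is_ideal (ideal_gen S).
Proof.
split.
- by exists 0%N, (fun _ => 0), (fun _ => 0); split => //; [case | rewrite big_ord0].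
- move=> _ _ [k1 [c1 [g1 [S1 ->]]]] [k2 [c2 [g2 [S2 ->]]]].
  pose glue T (u : 'I_k1 -> T) (v : 'I_k2 -> T) i :=
    match split i with inl j => u j | inr j => v j end.
  exists (k1 + k2)%N, (glue _ c1 c2), (glue _ g1 g2); split.
    by move=> i; rewrite /glue; case: (split i).
  by rewrite big_split_ord /glue; congr (_ + _); apply: eq_bigr => i _;
    [rewrite (unsplitK (inl _ i)) | rewrite (unsplitK (inr _ i))].
- move=> r _ [k [c [g [Sg ->]]]]; exists k, (fun i => r * c i), g; split => //.
  by rewrite mulr_sumr; apply: eq_bigr => i _; rewrite mulrA.
Qed.

Lemma mem_ideal_gen S h : S h -> ideal_gen S h.
Proof.
by move=> Sh; exists 1%N, (fun _ => 1), (fun _ => h); rewrite big_ord1 mul1r.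
Qed.

Section IdealClosure.
Variables (I : P -> Prop) (idI : is_ideal I).

Lemma ideal_gen_min S : (forall h, S h -> I h) -> forall h, ideal_gen S h -> I h.
Proof.
case: idI => I0 ID IM SI _ [k [c [g [Sg ->]]]].
by elim/big_rec: _ => // i x _ Ix; apply: ID => //; apply/IM/SI.
Qed.

Lemma is_ideal0 : I 0. Proof. by case: idI. Qed.

Lemma is_idealD a b : I a -> I b -> I (a + b). Proof. by case: idI => _ ID _; apply: ID. Qed.

Lemma is_idealMl r a : I a -> I (r * a). Proof. by case: idI => _ _ IM; apply: IM. Qed.

Lemma is_idealMr r a : I a -> I (a * r). Proof. by rewrite mulrC; apply: is_idealMl. Qed.

Lemma is_idealN a : I a -> I (- a). Proof. by rewrite -mulN1r; apply: is_idealMl. Qed.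

Lemma is_idealB a b : I a -> I b -> I (a - b).
Proof. by move=> Ia Ib; apply/is_idealD/is_idealN. Qed.

Lemma is_ideal_sum (T : Type) (r : seq T) (F : T -> P) :
  (forall i, I (F i)) -> I (\sum_(i <- r) F i).
Proof. by move=> IF; elim/big_rec: _ => [|i x _ Ix]; [apply: is_ideal0 | apply: is_idealD]. Qed.

End IdealClosure.

Lemma is_ideal_mulr_preim (I : P -> Prop) w : is_ideal I -> is_ideal (fun u => I (u * w)).
Proof.
move=> idI; split=> [|u v Iu Iv|r u Iu]; first by rewrite mul0r; apply: is_ideal0.
  by rewrite mulrDl; apply: is_idealD.
by rewrite -mulrA; apply: is_idealMl.
Qed.

Lemma ideal_mul_min (I : P -> Prop) S T : is_ideal I ->
  (forall u v, S u -> T v -> I (u * v)) ->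
  forall h, ideal_mul (ideal_gen S) (ideal_gen T) h -> I h.
Proof.
move=> idI IST; apply: (ideal_gen_min idI) => _ [u [v [Su Tv ->]]].
apply: (ideal_gen_min (is_ideal_mulr_preim v idI) _ Su) => u0 Su0; rewrite mulrC.
by apply: (ideal_gen_min (is_ideal_mulr_preim u0 idI) _ Tv) => v0 Tv0; rewrite mulrC; apply: IST.
Qed.

Lemma ideal_gen_homog S d g : (forall h, S h -> exists e, h \is e.-homog) ->
  ideal_gen S g -> ideal_gen S (pihomog mdeg d g).
Proof.
move=> Shomog [k [c [gg [Sg ->]]]]; have idS := ideal_gen_ideal S.
rewrite raddf_sum; apply: is_ideal_sum => // i /=.
have [e homg] := Shomog _ (Sg i).
rewrite [c i](pihomog_partitionE (mf := mdeg) (leqnn _)) mulr_suml raddf_sum /=.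
apply: is_ideal_sum => // j.
have homcg : pihomog mdeg j (c i) * gg i \is (j + e)%N.-homog.
  by apply: dhomogM => //; apply: pihomogP.
have [<-|ne] := eqVneq (j + e)%N d; last by rewrite (pihomog_ne0 ne homcg); apply: is_ideal0.
by rewrite pihomog_dE //; apply/(is_idealMl idS)/mem_ideal_gen.
Qed.

End Ideals.

(** * Lowest-degree parts and initial forms *)

Section VanishBelow.
Variables (K : fieldType) (n : nat).
Local Notation P := {mpoly K[n]}.
Implicit Types (f g : P) (m : 'X_{1..n}).

Definition vanish_below e f := forall m, (mdeg m < e)%N -> f@_m = 0.

Lemma vanish_below0 e : vanish_below e 0.
Proof. by move=> m _; rewrite mcoeff0. Qed.

Lemma vanish_belowD e f g :
  vanish_below e f -> vanish_below e g -> vanish_below e (f + g).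
Proof. by move=> vf vg m lt; rewrite mcoeffD vf ?vg ?addr0. Qed.

Lemma vanish_belowN e f : vanish_below e f -> vanish_below e (- f).
Proof. by move=> vf m lt; rewrite mcoeffN vf ?oppr0. Qed.

Lemma vanish_below_sum e (T : Type) (r : seq T) (F : T -> P) :
  (forall i, vanish_below e (F i)) -> vanish_below e (\sum_(i <- r) F i).
Proof.
move=> vF; elim/big_rec: _ => [|i x _ vx]; first exact: vanish_below0.
exact: vanish_belowD.
Qed.

Lemma vanish_below_le e1 e2 f :
  (e1 <= e2)%N -> vanish_below e2 f -> vanish_below e1 f.
Proof. by move=> le v m lt; apply: v; apply: leq_trans le. Qed.

Lemma vanish_below_homog d f : f \is d.-homog -> vanish_below d f.
Proof.
move=> homf m lt; apply: (dhomog_nemf_coeff homf).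
by rewrite neq_ltn lt.
Qed.

Lemma vanish_belowM e1 e2 f g : vanish_below e1 f -> vanish_below e2 g ->
  vanish_below (e1 + e2) (f * g).
Proof.
move=> vf vg m lt; rewrite mcoeffM big1 // => k /eqP Em.
have : (mdeg k.1 + mdeg k.2 < e1 + e2)%N by rewrite -mdegD -Em.
have [lt1|ge1] := ltnP (mdeg k.1) e1 => lt12; first by rewrite vf ?mul0r.
by rewrite vg ?mulr0 // -(ltn_add2l (mdeg k.1)); apply: leq_trans lt12 _; rewrite leq_add2r.
Qed.

Lemma mcoeff_pihomog d f m :
  (pihomog mdeg d f)@_m = if mdeg m == d then f@_m else 0.
Proof.
have [Em|ne] := eqVneq (mdeg m) d; last first.
  by apply: dhomog_nemf_coeff ne; apply: pihomogP.
rewrite pihomogE raddf_sum /= big_mkcond /=.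
under eq_bigr => m' _ do rewrite mcoeffZ mcoeffX.
have [fm|fm] := boolP (m \in msupp f); last first.
  rewrite (memN_msupp_eq0 fm) big1_seq // => m' /andP[_ fm'].
  by rewrite (_ : m' == m = false) ?mulr0 ?if_same //; apply: contraNF fm => /eqP <-.
rewrite (bigD1_seq m) ?msupp_uniq //= Em eqxx eqxx mulr1 big1 ?addr0 // => m' /negbTE ->.
by rewrite mulr0 if_same.
Qed.

Lemma pihomog_vanish_below e d f :
  vanish_below e f -> (d < e)%N -> pihomog mdeg d f = 0.
Proof.
move=> vf lt; apply/mpolyP => m; rewrite mcoeff_pihomog mcoeff0.
by case: eqP => // Em; rewrite vf // Em.
Qed.

Lemma vanish_below_subS e f :
  vanish_below e f -> vanish_below e.+1 (f - pihomog mdeg e f).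
Proof.
move=> vf m lt; rewrite mcoeffB mcoeff_pihomog.
case: eqP => [_|ne]; first by rewrite subrr.
by rewrite vf ?subr0 // ltn_neqAle -ltnS lt andbT; apply/eqP.
Qed.

Lemma vanish_below_lowdeg f : vanish_below (lowdeg f) f.
Proof.
move=> m lt; apply: memN_msupp_eq0; apply: contraTN lt => mf.
by rewrite -leqNgt; exact: (@ge_bigmin_seq _ nat _ _ _ _ predT mdeg mf).
Qed.

Lemma lowdeg_homog_sum d f g : f \is d.-homog -> f != 0 ->
  vanish_below d.+1 g -> lowdeg (f + g) = d.
Proof.
move=> homf nzf vg.
have vfg : vanish_below d (f + g).
  by apply: vanish_belowD; [apply: vanish_below_homog | apply: vanish_below_le vg].
have [m0 fm0] : exists m0, m0 \in msupp f.
  by move: nzf; rewrite -msupp_eq0; case: (msupp f) => // m0 s _; exists m0; rewrite mem_head.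
have dm0 : mdeg m0 = d by apply: (dhomog_mf homf).
have fgm0 : m0 \in msupp (f + g).
  by rewrite mcoeff_msupp mcoeffD (vg m0) ?dm0 // addr0 -mcoeff_msupp.
apply/eqP; rewrite eqn_leq; apply/andP; split.
  by rewrite -dm0; exact: (@ge_bigmin_seq _ nat _ _ _ _ predT mdeg fgm0).
rewrite /lowdeg big_seq; apply: (@le_bigmin _ nat) => [|m fgm].
  by rewrite leEnat -dm0 ltnW // msize_mdeg_lt.
by rewrite leEnat leqNgt; apply: contraTN fgm => lt; rewrite mcoeff_msupp vfg ?eqxx.
Qed.

Lemma initf_homog_sum d f g : f \is d.-homog -> f != 0 ->
  vanish_below d.+1 g -> initf (f + g) = f.
Proof.
move=> homf nzf vg; rewrite /initf (lowdeg_homog_sum homf nzf vg).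
by rewrite pihomogD pihomog_dE // (pihomog_vanish_below vg) ?addr0.
Qed.

Lemma initf0 : initf (0 : P) = 0.
Proof. by rewrite /initf pihomog0. Qed.

Lemma initf_homog d f : f \is d.-homog -> initf f = f.
Proof.
have [->|nzf] := eqVneq f 0; first by rewrite initf0.
by move=> homf; rewrite -{1}[f]addr0 (initf_homog_sum homf nzf) //; apply: vanish_below0.
Qed.

End VanishBelow.

(** * Monomial maps *)

Lemma mpolyX_neq0 (R : nzRingType) n (m : 'X_{1..n}) : ('X_[m] : {mpoly R[n]}) != 0.
Proof. by rewrite -msupp_eq0 msuppX. Qed.

Lemma sum_pick_ord k (F : 'I_k -> nat) (i0 : 'I_k) :
  (\sum_(i < k) (i == i0) * F i)%N = F i0.
Proof.
rewrite (bigD1 i0) //= eqxx mul1n big1 ?addn0 // => i /negbTE ->.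
by rewrite mul0n.
Qed.

Lemma big_partition_seq (T1 T2 : eqType) (V : nmodType) (s : seq T1)
    (f : T1 -> T2) (F : T1 -> V) :
  \sum_(m <- s) F m = \sum_(t <- undup (map f s)) \sum_(m <- s | f m == t) F m.
Proof.
rewrite [RHS](eq_bigr (fun t => \sum_(m <- s) (if f m == t then F m else 0))); last first.
  by move=> t _; rewrite big_mkcond.
rewrite exchange_big /=; apply: eq_big_seq => m ms.
rewrite -big_mkcond -big_filter (eq_filter (a2 := pred1 (f m))); last first.
  by move=> t /=; rewrite eq_sym.
by rewrite filter_pred1_uniq ?undup_uniq ?big_seq1 // mem_undup map_f.
Qed.

Section MonomialMap.
Variables (K : fieldType) (n k : nat) (A : 'I_k -> 'I_n -> nat).
Local Notation P := {mpoly K[n]}.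
Local Notation Q := {mpoly K[k]}.
Implicit Types (m : 'X_{1..n}) (u : P).

Definition mnm_map m : 'X_{1..k} := [multinom (\sum_(i < n) A j i * m i)%N | j < k].

Lemma mnm_mapE m j : mnm_map m j = (\sum_(i < n) A j i * m i)%N.
Proof. by rewrite mnmE. Qed.

Lemma mnm_map0 : mnm_map 0%MM = 0%MM.
Proof.
by apply/mnmP => j; rewrite mnm_mapE mnm0E big1 // => i _; rewrite mnm0E muln0.
Qed.

Lemma mnm_mapD m1 m2 : mnm_map (m1 + m2)%MM = (mnm_map m1 + mnm_map m2)%MM.
Proof.
apply/mnmP => j; rewrite mnmDE !mnm_mapE -big_split; apply: eq_bigr => i _.
by rewrite mnmDE mulnDr.
Qed.

Lemma mnm_mapU i j : mnm_map U_(i)%MM j = A j i.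
Proof.
rewrite mnm_mapE (bigD1 i) //= mnm1E eqxx muln1 big1 ?addn0 // => i' ne.
by rewrite mnm1E eq_sym (negbTE ne) muln0.
Qed.

Definition mono_subst : P -> Q :=
  mmap (@mpolyC k K) (fun i => 'X_[mnm_map U_(i)]).

HB.instance Definition _ := GRing.isAdditive.Build P Q mono_subst
  (mmap_is_additive _ _).
HB.instance Definition _ := GRing.isMultiplicative.Build P Q mono_subst
  (mmap_is_multiplicative _ _).

Lemma mmap1_mnm_map m :
  mmap1 (fun i => 'X_[mnm_map U_(i)] : Q) m = 'X_[mnm_map m].
Proof.
rewrite /mmap1; under eq_bigr => i _ do rewrite mpolyXn.
rewrite -(big_morph (fun m : 'X_{1..k} => 'X_[m] : Q) (@mpolyXD _ _) (mpolyX0 _ _)).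
congr 'X_[_]; apply/mnmP => j; rewrite mnm_sumE mnm_mapE; apply: eq_bigr => i _.
by rewrite mulmnE mnm_mapU mulnC.
Qed.

Lemma mono_substX m : mono_subst 'X_[m] = 'X_[mnm_map m].
Proof. by rewrite /mono_subst mmapX mmap1_mnm_map. Qed.

Lemma mcoeff_mono_subst u t :
  (mono_subst u)@_t = \sum_(m <- msupp u | mnm_map m == t) u@_m.
Proof.
rewrite /mono_subst /mmap raddf_sum /= [RHS]big_mkcond /=; apply: eq_bigr => m _.
rewrite mmap1_mnm_map mcoeffCM mcoeffX.
by case: eqP; rewrite ?mulr1 ?mulr0.
Qed.

Definition binomial_closed (J : P -> Prop) :=
  forall m m', mnm_map m = mnm_map m' -> J ('X_[m] - 'X_[m']).

Section Kernel.
Variables (J : P -> Prop) (idJ : is_ideal J).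

Lemma binomial_closed_exchange :
  (forall m, mnm_map m = 0%MM -> m = 0%MM) ->
  (forall m m' i, mnm_map m = mnm_map m' -> (0 < m i)%N ->
    exists2 m'' : 'X_{1..n}, (0 < m'' i)%N /\ mnm_map m'' = mnm_map m' & J ('X_[m'] - 'X_[m''])) ->
  binomial_closed J.
Proof.
(* Induction on mdeg m: after an exchange, 'X_i divides both monomials and cancels. *)
move=> inj0 exch m; have [N] := ubnP (mdeg m); elim: N m => // N IH m ltmN m'.
have [-> | [i mi]] : m = 0%MM \/ exists i, (0 < m i)%N.
  case: (pickP (fun i => 0 < m i)%N) => [i mi | m0]; [by right; exists i | left].
  by apply/mnmP => i; rewrite mnm0E; have := m0 i; rewrite lt0n => /negbFE/eqP.
  by move=> Em; rewrite (inj0 m') ?subrr; [apply: is_ideal0 | rewrite -Em mnm_map0].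
move=> Em; have [m'' [m''i Em''] Jm'm''] := exch _ _ _ Em mi.
have splitU m0 : (0 < m0 i)%N -> m0 = (m0 - U_(i) + U_(i))%MM.
  by move=> m0i; rewrite submK //; apply/mnm_lepP => j; rewrite mnm1E; case: eqP => // <-.
have Jmm'' : J ('X_[m] - 'X_[m'']).
  rewrite (splitU _ mi) (splitU _ m''i) !mpolyXD -mulrBl; apply: (is_idealMr idJ).
  apply: IH; last first.
    by apply: (@addIm _ (mnm_map U_(i))); rewrite -!mnm_mapD -!splitU // Em Em''.
  by move: ltmN; rewrite {1}(splitU _ mi) mdegD mdeg1 addn1 ltnS.
rewrite -[_ - _](subrKA ('X_[m''] : P)); apply: (is_idealD idJ) => //.
by rewrite -opprB; apply: (is_idealN idJ).
Qed.

Lemma mono_subst_kernel u : binomial_closed J -> mono_subst u = 0 -> J u.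
Proof.
(* Replace every monomial by a representative of its fibre: the difference is in J, and the
   coefficient of the result on a representative is a coefficient of mono_subst u = 0. *)
move=> bcJ u0.
pose rep t := head 0%MM [seq m <- msupp u | mnm_map m == t].
have mnm_map_rep m : m \in msupp u -> mnm_map (rep (mnm_map m)) = mnm_map m.
  move=> um; rewrite /rep.
  have : m \in [seq m' <- msupp u | mnm_map m' == mnm_map m] by rewrite mem_filter eqxx.
  case E: [seq _ <- _ | _] => [|h tl] //= _.
  by have := mem_head h tl; rewrite -E mem_filter => /andP[/eqP].
rewrite [u]mpolyE.
have -> : \sum_(m <- msupp u) u@_m *: 'X_[m] =
    \sum_(m <- msupp u) u@_m *: ('X_[m] - 'X_[rep (mnm_map m)]) +
    \sum_(m <- msupp u) u@_m *: 'X_[rep (mnm_map m)].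
  by rewrite -big_split /=; apply: eq_bigr => m _; rewrite -scalerDr subrK.
rewrite (big_partition_seq _ mnm_map (fun m => u@_m *: 'X_[rep (mnm_map m)] : P)).
rewrite [X in _ + X]big1_seq ?addr0 => [|t _]; last first.
  rewrite (eq_bigr (fun m => u@_m *: 'X_[rep t])) => [|m /eqP -> //].
  by rewrite -scaler_suml -mcoeff_mono_subst u0 mcoeff0 scale0r.
rewrite big_seq big_mkcond; apply: (is_ideal_sum idJ) => m; case: ifP => um; last exact: is_ideal0.
by rewrite -mul_mpolyC; apply: (is_idealMl idJ); apply: bcJ; rewrite mnm_map_rep.
Qed.

End Kernel.

End MonomialMap.

(** * The ideal I2 as a toric ideal *)

Lemma e_homog (K : fieldType) (n k : nat) : @e K n k \is 1.-homog.
Proof.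
rewrite /e; case: insub => [i|]; last exact: dhomog0.
by rewrite dhomogX; apply/eqP; apply: mdeg1.
Qed.

Section Setup.
Variables (K : fieldType) (p : nat).
Hypothesis p_ge3 : (3 <= p)%N.
Local Notation n := (2 * p)%N.
Local Notation P := {mpoly K[n]}.
Local Notation I := 'I_p.-1.

Fact n_gt0 : (0 < n)%N. Proof. lia. Qed.

Definition idx k : 'I_n := insubd (Ordinal n_gt0) k.

Lemma val_idx k : (k < n)%N -> idx k = k :> nat.
Proof. by move=> lt; rewrite val_insubd lt. Qed.

Definition xv (s : I) := idx s.
Definition yv (s : I) := idx (p + s).
Definition av := idx p.-1.
Definition bv := idx n.-1.

Lemma val_xv s : xv s = s :> nat.
Proof. by rewrite val_idx //; have := ltn_ord s; lia. Qed.

Lemma val_yv s : yv s = p + s :> nat.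
Proof. by rewrite val_idx //; have := ltn_ord s; lia. Qed.

Lemma val_av : av = p.-1 :> nat. Proof. by rewrite val_idx //; lia. Qed.

Lemma val_bv : bv = n.-1 :> nat. Proof. by rewrite val_idx //; lia. Qed.

Variant var_spec : 'I_n -> Type :=
  | VarX s : var_spec (xv s)
  | VarA : var_spec av
  | VarY s : var_spec (yv s)
  | VarB : var_spec bv.

Lemma varP i : var_spec i.
Proof.
have ltin := ltn_ord i.
have [ltx|gex] := ltnP i p.-1.
  have -> : i = xv (Ordinal ltx) by apply: val_inj; rewrite /= val_xv.
  exact: VarX.
have [eqa|nea] := eqVneq (nat_of_ord i) p.-1.
  have -> : i = av by apply: val_inj; rewrite /= val_av.
  exact: VarA.
have [lty|gey] := ltnP i n.-1.
  have lts : (i - p < p.-1)%N by lia.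
  have -> : i = yv (Ordinal lts) by apply: val_inj; rewrite /= val_yv /=; lia.
  exact: VarY.
have -> : i = bv by apply: val_inj; rewrite /= val_bv; lia.
exact: VarB.
Qed.

Definition x (s : nat) : P := @e K n s.+1.
Definition y (s : nat) : P := @e K n (p + s.+1).
Definition a : P := @e K n p.
Definition b : P := @e K n n.

Lemma e_idx k : (0 < k <= n)%N -> @e K n k = 'X_(idx k.-1).
Proof.
move=> rng; rewrite /e; case: insubP => [i lti vi|]; last by rewrite ltnNge; lia.
by congr 'X_(_); apply: val_inj; rewrite /= vi val_idx //; lia.
Qed.

Lemma xE (s : I) : x s = 'X_(xv s).
Proof. by rewrite /x e_idx //; have := ltn_ord s; lia. Qed.

Lemma yE (s : I) : y s = 'X_(yv s).
Proof. by rewrite /y e_idx /yv; [congr 'X_(idx _); lia | have := ltn_ord s; lia]. Qed.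

Definition xy_minor (s t : nat) : P := x s * y t - x t * y s.

Definition I2 : P -> Prop := ideal_gen (fun h => exists s t : I, h = xy_minor s t).

Lemma I2_ideal : is_ideal I2. Proof. exact: ideal_gen_ideal. Qed.

Lemma xy_minor_I2 (s t : I) : I2 (xy_minor s t).
Proof. by apply: mem_ideal_gen; exists s, t. Qed.

Lemma xy_minor_homog s t : xy_minor s t \is 2.-homog.
Proof. by rewrite rpredB // (dhomogM (e_homog _ _ _) (e_homog _ _ _)). Qed.

Lemma I2_pihomog d g : I2 g -> I2 (pihomog mdeg d g).
Proof. by apply: ideal_gen_homog => _ [s [t ->]]; exists 2%N; apply: xy_minor_homog. Qed.

End Setup.

Section ToricMap.
Variables (K : fieldType) (p : nat).
Hypothesis p_ge3 : (3 <= p)%N.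
Local Notation n := (2 * p)%N.
Local Notation P := {mpoly K[n]}.
Local Notation I := 'I_p.-1.
Local Notation xv := (xv p_ge3).
Local Notation yv := (yv p_ge3).
Local Notation av := (av p_ge3).
Local Notation bv := (bv p_ge3).
Local Notation varP := (varP p_ge3).
Local Notation x := (x K p).
Local Notation y := (y K p).
Local Notation I2 := (@I2 K p).
Local Notation xy_minor := (xy_minor K p).
Implicit Types (m : 'X_{1..n}) (s t : I) (u : P).

(* Exponent matrix of x_s |-> w_s l, y_s |-> w_s m, a |-> a', b |-> b', the target
   variables w_s, l, m, a', b' being those of index wc s, lc, mc, ac, bc below. *)
Definition tau_exp (j' : 'I_p.+3) (i' : 'I_n) : nat :=
  let j := nat_of_ord j' in let i := nat_of_ord i' in
  if (j < p.-1)%N then (i == j) || (i == p + j)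
  else if j == p.-1 then (i < p.-1)%N
  else if j == p then (p <= i < n.-1)%N
  else if j == p.+1 then i == p.-1
  else i == n.-1.

Local Notation tau := (mnm_map tau_exp).
Local Notation phi := (@mono_subst K n p.+3 tau_exp).

Definition wc (s : I) : 'I_p.+3 := inord s.
Definition lc : 'I_p.+3 := inord p.-1.
Definition mc : 'I_p.+3 := inord p.
Definition ac : 'I_p.+3 := inord p.+1.
Definition bc : 'I_p.+3 := inord p.+2.

Ltac cases_lia := repeat case: ifP; repeat case: eqP; try lia.

Lemma tau_xv s : tau U_(xv s) = (U_(wc s) + U_(lc))%MM.
Proof.
apply/mnmP => j; rewrite mnm_mapU mnmDE !mnm1E -!(inj_eq val_inj) /= !inordK /tau_exp /=;
  rewrite ?val_xv; have := ltn_ord s; have := ltn_ord j; cases_lia.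
Qed.

Lemma tau_yv s : tau U_(yv s) = (U_(wc s) + U_(mc))%MM.
Proof.
apply/mnmP => j; rewrite mnm_mapU mnmDE !mnm1E -!(inj_eq val_inj) /= !inordK /tau_exp /=;
  rewrite ?val_yv; have := ltn_ord s; have := ltn_ord j; cases_lia.
Qed.

Lemma tau_exp_wc s i : tau_exp (wc s) i = ((i == xv s) || (i == yv s)) :> nat.
Proof.
by rewrite /tau_exp inordK -?(inj_eq val_inj) /= ?val_xv ?val_yv ?ltn_ord //;
  have := ltn_ord s; lia.
Qed.

Lemma tau_exp_lc i : tau_exp lc i = (i < p.-1)%N.
Proof. by rewrite /tau_exp inordK ?ltnn ?eqxx //; lia. Qed.

Lemma tau_exp_mc i : tau_exp mc i = (p <= i < n.-1)%N.
Proof. by rewrite /tau_exp inordK //; cases_lia. Qed.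

Lemma tau_exp_ac i : tau_exp ac i = (i == av).
Proof. by rewrite /tau_exp inordK // -(inj_eq val_inj) /= val_av; cases_lia. Qed.

Lemma tau_exp_bc i : tau_exp bc i = (i == bv).
Proof. by rewrite /tau_exp inordK // -(inj_eq val_inj) /= val_bv; cases_lia. Qed.

Lemma tau_wc m s : tau m (wc s) = (m (xv s) + m (yv s))%N.
Proof.
rewrite mnm_mapE -(sum_pick_ord m (xv s)) -(sum_pick_ord m (yv s)) -big_split.
apply: eq_bigr => i _ /=; rewrite tau_exp_wc -mulnDl; congr (_ * _)%N.
by case: eqP => // ->; rewrite -(inj_eq val_inj) /= val_xv val_yv; case: eqP => //; lia.
Qed.

Lemma tau_lc m : tau m lc = (\sum_(i < n | (i < p.-1)%N) m i)%N.
Proof.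
rewrite mnm_mapE [RHS]big_mkcond; apply: eq_bigr => i _ /=.
by rewrite tau_exp_lc; case: ifP; rewrite ?mul1n ?mul0n.
Qed.

Lemma tau_mc m : tau m mc = (\sum_(i < n | (p <= i < n.-1)%N) m i)%N.
Proof.
rewrite mnm_mapE [RHS]big_mkcond; apply: eq_bigr => i _ /=.
by rewrite tau_exp_mc; case: ifP; rewrite ?mul1n ?mul0n.
Qed.

Lemma tau_ac m : tau m ac = m av.
Proof.
by rewrite mnm_mapE -(sum_pick_ord m av); apply: eq_bigr => i _; rewrite tau_exp_ac.
Qed.

Lemma tau_bc m : tau m bc = m bv.
Proof.
by rewrite mnm_mapE -(sum_pick_ord m bv); apply: eq_bigr => i _; rewrite tau_exp_bc.
Qed.

Lemma mdeg_tau m : mdeg m = (tau m lc + tau m mc + tau m ac + tau m bc)%N.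
Proof.
rewrite !mnm_mapE -!big_split mdegE; apply: eq_bigr => i _ /=.
rewrite tau_exp_lc tau_exp_mc tau_exp_ac tau_exp_bc -!mulnDl -!(inj_eq val_inj) /=.
by rewrite val_av val_bv; have := ltn_ord i; cases_lia.
Qed.

Lemma tau_eq0 m : tau m = 0%MM -> m = 0%MM.
Proof. by move=> tm0; apply/eqP; rewrite -mdeg_eq0 mdeg_tau tm0 !mnm0E. Qed.

Lemma exists_xv_pos m : (0 < tau m lc)%N -> exists t : I, (0 < m (xv t))%N.
Proof.
rewrite tau_lc lt0n sum_nat_eq0 => /forallPn[i]; rewrite negb_imply -lt0n.
case: (varP i) => [t||t|] /andP[lt pos]; first by exists t.
all: by move: lt; rewrite /= ?val_av ?val_yv ?val_bv; lia.
Qed.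

Lemma exists_yv_pos m : (0 < tau m mc)%N -> exists t : I, (0 < m (yv t))%N.
Proof.
rewrite tau_mc lt0n sum_nat_eq0 => /forallPn[i]; rewrite negb_imply -lt0n.
case: (varP i) => [t||t|] /andP[lt pos]; last 2 first.
- by exists t.
- by move: lt; rewrite /= val_bv; lia.
- by move: lt; rewrite /= val_xv; have := ltn_ord t; lia.
- by move: lt; rewrite /= val_av; lia.
Qed.

Definition swap_xy m (s t : I) := (m - U_(xv t) - U_(yv s) + U_(xv s) + U_(yv t))%MM.

Lemma swap_xy_spec m s t : (0 < m (xv t))%N -> (0 < m (yv s))%N ->
  [/\ tau (swap_xy m s t) = tau m, I2 ('X_[m] - 'X_[swap_xy m s t]),
      (0 < swap_xy m s t (xv s))%N & (0 < swap_xy m s t (yv t))%N].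
Proof.
move=> mxt mys; rewrite /swap_xy; set r := (m - _ - _)%MM.
have Em : m = (r + U_(xv t) + U_(yv s))%MM.
  have xy_neq : yv s != xv t.
    by rewrite -(inj_eq val_inj) /= val_xv val_yv; have := ltn_ord t; lia.
  apply/mnmP => i; rewrite !mnmDE !mnmBE !mnm1E.
  have [<-|nex] := eqVneq (xv t) i; first by rewrite (negbTE xy_neq) /=; lia.
  by case: eqP => /= [<-|_]; lia.
split.
- rewrite [in RHS]Em !mnm_mapD !tau_xv !tau_yv; apply/mnmP => j; rewrite !mnmDE; lia.
- rewrite [in 'X_[m]]Em !mpolyXD -!xE -!yE.
  have -> : 'X_[r] * x t * y s - 'X_[r] * x s * y t = 'X_[r] * xy_minor t s.
    by rewrite /xy_minor; ring.
  exact/(is_idealMl (I2_ideal K p))/(xy_minor_I2 K).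
- by rewrite !mnmDE !mnm1E eqxx; lia.
- by rewrite !mnmDE !mnm1E eqxx; lia.
Qed.

Lemma tau_exchange m m' i : tau m = tau m' -> (0 < m i)%N ->
  exists2 m'' : 'X_{1..n}, (0 < m'' i)%N /\ tau m'' = tau m' & I2 ('X_[m'] - 'X_[m'']).
Proof.
move=> Em mi; have [m'i0|m'i] := posnP (m' i); last first.
  by exists m' => //; rewrite subrr; apply: (is_ideal0 (I2_ideal K p)).
have coord j : tau m j = tau m' j by rewrite Em.
case: (varP i) mi m'i0 => [s||s|] mi m'i0.
- have /exists_xv_pos[t m'xt] : (0 < tau m' lc)%N.
    by rewrite -coord tau_lc (bigD1 (xv s)) /= ?val_xv //; lia.
  have m'ys : (0 < m' (yv s))%N by have := coord (wc s); rewrite !tau_wc; lia.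
  have [tau_sw I2_sw sw_pos _] := swap_xy_spec m'xt m'ys.
  by exists (swap_xy m' s t).
- by have := coord ac; rewrite !tau_ac; lia.
- have /exists_yv_pos[t m'yt] : (0 < tau m' mc)%N.
    by rewrite -coord tau_mc (bigD1 (yv s)) /= ?val_yv //; have := ltn_ord s; lia.
  have m'xs : (0 < m' (xv s))%N by have := coord (wc s); rewrite !tau_wc; lia.
  have [tau_sw I2_sw _ sw_pos] := swap_xy_spec m'xs m'yt.
  by exists (swap_xy m' t s).
- by have := coord bc; rewrite !tau_bc; lia.
Qed.

Lemma I2_binomial_closed : binomial_closed tau_exp I2.
Proof. exact: (binomial_closed_exchange (I2_ideal K p) tau_eq0 tau_exchange). Qed.

Lemma phi_x s : phi (x s) = 'X_(wc s) * 'X_lc.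
Proof. by rewrite xE mono_substX tau_xv mpolyXD. Qed.

Lemma phi_y s : phi (y s) = 'X_(wc s) * 'X_mc.
Proof. by rewrite yE mono_substX tau_yv mpolyXD. Qed.

Lemma ker_phi u : phi u = 0 <-> I2 u.
Proof.
split; first exact/(mono_subst_kernel (I2_ideal K p))/I2_binomial_closed.
have kerI : is_ideal (fun u => phi u = 0).
  split=> [|u1 u2 h1 h2|r u1 h1]; by rewrite ?rmorph0 ?raddfD ?rmorphM /= ?h1 ?h2 ?addr0 ?mulr0.
apply: (ideal_gen_min kerI) => _ [s [t ->]].
by rewrite rmorphB /= !rmorphM /= !phi_x !phi_y; ring.
Qed.

End ToricMap.

(** * Initial forms modulo I2 *)

Section InitialForm.
Variables (K : fieldType) (p : nat).
Hypothesis p_ge3 : (3 <= p)%N.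
Local Notation n := (2 * p)%N.
Local Notation P := {mpoly K[n]}.
Local Notation I := 'I_p.-1.
Local Notation x := (x K p).
Local Notation y := (y K p).
Local Notation a := (a K p).
Local Notation b := (b K p).
Local Notation I2 := (@I2 K p).
Local Notation xy_minor := (xy_minor K p).
Local Notation phi := (@mono_subst K n p.+3 (@tau_exp p)).
Implicit Types (d : I -> I -> P) (f g : P).

Definition cubic_tail (s t : nat) : P := - (a * x s * y t) + b * x s * x t.

Definition mixed_minor (s t : nat) : P := y s * y t + cubic_tail s t.

Definition wsum d (F : nat -> nat -> P) : P := \sum_(s : I) \sum_(t : I) d s t * F s t.

Definition I2_mixed f := exists g d, I2 g /\ f = g + wsum d mixed_minor.

Lemma wsum0 F : wsum (fun _ _ => 0) F = 0.
Proof. by rewrite /wsum big1 // => s _; rewrite big1 // => t _; rewrite mul0r. Qed.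

Lemma wsumD d1 d2 F : wsum (fun s t => d1 s t + d2 s t) F = wsum d1 F + wsum d2 F.
Proof.
rewrite /wsum -big_split; apply: eq_bigr => s _; rewrite -big_split.
by apply: eq_bigr => t _; rewrite mulrDl.
Qed.

Lemma wsumMl c d F : wsum (fun s t => c * d s t) F = c * wsum d F.
Proof.
rewrite /wsum mulr_sumr; apply: eq_bigr => s _; rewrite mulr_sumr.
by apply: eq_bigr => t _; rewrite mulrA.
Qed.

Lemma I2_mixed_ideal : is_ideal I2_mixed.
Proof.
have idI2 := I2_ideal K p; split.
- by exists 0, (fun _ _ => 0); rewrite wsum0 addr0; split => //; apply: is_ideal0.
- move=> _ _ [g1 [d1 [I2g1 ->]]] [g2 [d2 [I2g2 ->]]].
  exists (g1 + g2), (fun s t => d1 s t + d2 s t); rewrite wsumD.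
  by split; [apply: is_idealD | ring].
- move=> c _ [g [d [I2g ->]]]; exists (c * g), (fun s t => c * d s t).
  by rewrite wsumMl mulrDr; split => //; apply: is_idealMl.
Qed.

Lemma I2_sub_I2_mixed g : I2 g -> I2_mixed g.
Proof. by move=> I2g; exists g, (fun _ _ => 0); rewrite wsum0 addr0. Qed.

Lemma mixed_minor_I2_mixed (s t : I) : I2_mixed (mixed_minor s t).
Proof.
exists 0, (fun s' t' => ((s' == s) && (t' == t))%:R); split.
  exact: (is_ideal0 (I2_ideal K p)).
rewrite add0r /wsum (bigD1 s) //= (bigD1 t) //= !eqxx mul1r.
rewrite big1 ?addr0 => [|t' /negbTE ->]; last by rewrite mul0r.
by rewrite big1 ?addr0 // => s' /negbTE ->; rewrite big1 // => t' _; rewrite mul0r.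
Qed.

Definition I2_ysq : P -> Prop :=
  ideal_gen (fun h => (exists s t : I, h = xy_minor s t) \/ exists s t : I, h = y s * y t).

Lemma I2_ysq_ideal : is_ideal I2_ysq. Proof. exact: ideal_gen_ideal. Qed.

Lemma I2_sub_I2_ysq g : I2 g -> I2_ysq g.
Proof.
apply: (ideal_gen_min I2_ysq_ideal) => h xyh.
by apply: mem_ideal_gen; left.
Qed.

Lemma wsum_ysq_I2_ysq d : I2_ysq (wsum d (fun s t => y s * y t)).
Proof.
apply: (is_ideal_sum I2_ysq_ideal) => s; apply: (is_ideal_sum I2_ysq_ideal) => t.
by apply/(is_idealMl I2_ysq_ideal)/mem_ideal_gen; right; exists s, t.
Qed.

Lemma cubic_tail_I2 d : I2 (wsum d (fun s t => y s * y t)) -> I2 (wsum d cubic_tail).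
Proof.
move=> /(ker_phi p_ge3) phi_ysq; apply/(ker_phi p_ge3).
pose w s : {mpoly K[p.+3]} := 'X_(wc s).
pose Om := \sum_(s : I) \sum_(t : I) phi (d s t) * (w s * w t).
have phi_wsum (F : nat -> nat -> P) c :
    (forall s t : I, phi (F s t) = c * (w s * w t)) ->
    phi (wsum d F) = c * Om.
  move=> phiF; rewrite rmorph_sum mulr_sumr; apply: eq_bigr => s _.
  rewrite rmorph_sum mulr_sumr; apply: eq_bigr => t _.
  by rewrite rmorphM /= phiF mulrCA.
have Om0 : Om = 0.
  move: phi_ysq; rewrite (phi_wsum _ ('X_(mc p) ^+ 2)) => [/eqP|s t].
    by rewrite mulf_eq0 expf_eq0 /= (negbTE (mpolyX_neq0 _ _)) => /eqP.
  by rewrite rmorphM /= !(phi_y K p_ge3) /w; ring.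
rewrite (phi_wsum _ (- (phi a * 'X_(lc p) * 'X_(mc p)) + phi b * 'X_(lc p) ^+ 2)).
  by rewrite Om0 mulr0.
move=> s t; rewrite /cubic_tail rmorphD rmorphN /= !rmorphM /=.
by rewrite !(phi_x K p_ge3) !(phi_y K p_ge3) /w; ring.
Qed.

Lemma ysq_homog s t : y s * y t \is 2.-homog.
Proof. exact: (dhomogM (e_homog _ _ _) (e_homog _ _ _)). Qed.

Lemma cubic_tail_vanish s t : vanish_below 3 (cubic_tail s t).
Proof.
have v1 k : vanish_below 1 (@e K n k) by apply/vanish_below_homog/e_homog.
have v3 i j k : vanish_below 3 (@e K n i * @e K n j * @e K n k).
  by apply: (vanish_belowM (e1 := 2)) (v1 _); apply: (vanish_belowM (e1 := 1)).
by apply: vanish_belowD; [apply/vanish_belowN/v3 | apply: v3].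
Qed.

Lemma mixed_minor_vanish s t : vanish_below 2 (mixed_minor s t).
Proof.
apply: vanish_belowD; first exact/vanish_below_homog/ysq_homog.
exact: vanish_below_le (cubic_tail_vanish s t).
Qed.

Section Split.
Variables (e : nat) (d : I -> I -> P).
Local Notation dlow := (fun s t => pihomog mdeg e (d s t)).
Local Notation dhigh := (fun s t => d s t - pihomog mdeg e (d s t)).

Lemma wsum_mixed_split : wsum d mixed_minor =
  wsum dlow (fun s t => y s * y t) + (wsum dlow cubic_tail + wsum dhigh mixed_minor).
Proof.
rewrite /wsum -!big_split /=; apply: eq_bigr => s _.
by rewrite -!big_split /=; apply: eq_bigr => t _; rewrite /mixed_minor; ring.
Qed.

Lemma wsum_dlow_ysq_homog : wsum dlow (fun s t => y s * y t) \is e.+2.-homog.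
Proof.
apply: rpred_sum => s _; apply: rpred_sum => t _; rewrite -[e.+2]addn2.
by apply: dhomogM; [exact: pihomogP | exact: ysq_homog].
Qed.

Lemma wsum_split_rest_vanish : (forall s t, vanish_below e (d s t)) ->
  vanish_below e.+3 (wsum dlow cubic_tail + wsum dhigh mixed_minor).
Proof.
move=> vd; apply: vanish_belowD; apply: vanish_below_sum => s;
  apply: vanish_below_sum => t.
  by rewrite -[e.+3]addn3; apply: vanish_belowM;
    [exact/vanish_below_homog/pihomogP | exact: cubic_tail_vanish].
have -> : e.+3 = (e.+1 + 2)%N by rewrite addn2.
apply: vanish_belowM; last exact: mixed_minor_vanish.
exact: vanish_below_subS.
Qed.

End Split.

Lemma initf_I2_ysq_lowdeg f g e d : I2 g -> (forall s t, vanish_below e (d s t)) ->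
  f = g + wsum d mixed_minor -> (lowdeg f <= e.+2)%N -> I2_ysq (initf f).
Proof.
move=> I2g vd Ef le_f.
rewrite /initf {2}Ef (wsum_mixed_split e) 2!pihomogD.
rewrite (pihomog_vanish_below (wsum_split_rest_vanish vd)) 1?addr0; last by lia.
apply: (is_idealD I2_ysq_ideal).
  exact/I2_sub_I2_ysq/I2_pihomog.
have [<-|ne] := eqVneq e.+2 (lowdeg f).
  by rewrite pihomog_dE ?wsum_dlow_ysq_homog //; apply: wsum_ysq_I2_ysq.
by rewrite (pihomog_ne0 ne (wsum_dlow_ysq_homog _ _)); apply: (is_ideal0 I2_ysq_ideal).
Qed.

Lemma I2_mixed_raise f g e d : I2 g -> (forall s t, vanish_below e (d s t)) ->
  f = g + wsum d mixed_minor -> (e.+2 < lowdeg f)%N ->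
  exists g' d', [/\ I2 g', forall s t, vanish_below e.+1 (d' s t)
                    & f = g' + wsum d' mixed_minor].
Proof.
move=> I2g vd Ef lt_f; have idI2 := I2_ideal K p.
set dlow := fun s t => pihomog mdeg e (d s t).
(* The degree e+2 part of f, namely that of g plus the dlow-combination of the y_s y_t,
   vanishes. *)
have : pihomog mdeg e.+2 f = 0 by apply: pihomog_vanish_below lt_f; apply: vanish_below_lowdeg.
rewrite {1}Ef (wsum_mixed_split e) 2!pihomogD.
rewrite (pihomog_vanish_below (wsum_split_rest_vanish vd)) // addr0.
rewrite (pihomog_dE (wsum_dlow_ysq_homog e d)) => /eqP; rewrite addrC addr_eq0 => /eqP Eysq.
have I2_ysq_part : I2 (wsum dlow (fun s t => y s * y t)).
  by rewrite Eysq; apply/(is_idealN idI2)/I2_pihomog.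
exists (g + wsum dlow (fun s t => y s * y t) + wsum dlow cubic_tail),
  (fun s t => d s t - dlow s t); split.
- by apply: (is_idealD idI2); [apply: (is_idealD idI2) | apply: cubic_tail_I2].
- by move=> s t; apply: vanish_below_subS.
- by rewrite {1}Ef (wsum_mixed_split e) !addrA.
Qed.

Lemma initf_I2_mixed f : I2_mixed f -> I2_ysq (initf f).
Proof.
move=> [g [d [I2g Ef]]].
suff raise k : forall e g d, (lowdeg f < e + k)%N -> I2 g ->
    (forall s t, vanish_below e (d s t)) -> f = g + wsum d mixed_minor -> I2_ysq (initf f).
  by apply: (raise (lowdeg f).+1 0%N g d) => //; lia.
elim: k => [|k IH] e g' d' lt_f I2g' vd' Ef'.
  by apply: (initf_I2_ysq_lowdeg I2g' vd' Ef'); lia.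
have [le_f|gt_f] := leqP (lowdeg f) e.+2; first exact: (initf_I2_ysq_lowdeg I2g' vd' Ef').
have [g'' [d'' [I2g'' vd'' Ef'']]] := I2_mixed_raise I2g' vd' Ef' gt_f.
by apply: (IH e.+1 g'' d'') => //; lia.
Qed.

End InitialForm.

(** * Minors *)

Lemma det_mx2 (R : comPzRingType) (F : nat -> nat -> R) :
  \det (\matrix_(i < 2, j < 2) F i j) = F 0 0 * F 1 1 - F 0 1 * F 1 0.
Proof.
rewrite (expand_det_row _ ord0) !big_ord_recl big_ord0 /cofactor !det_mx11 !mxE /=.
by rewrite /bump /=; ring.
Qed.

Lemma det_mx3 (R : comPzRingType) (F : nat -> nat -> R) :
  \det (\matrix_(i < 3, j < 3) F i j) =
    F 0 0 * (F 1 1 * F 2 2 - F 1 2 * F 2 1)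
  - F 0 1 * (F 1 0 * F 2 2 - F 1 2 * F 2 0)
  + F 0 2 * (F 1 0 * F 2 1 - F 1 1 * F 2 0).
Proof.
rewrite (expand_det_row _ ord0) !big_ord_recl big_ord0 /cofactor.
rewrite !(expand_det_row _ ord0) !big_ord_recl !big_ord0 /cofactor !det_mx11 !mxE /=.
by rewrite /bump /=; ring.
Qed.

Lemma incr_ord_id k (f : 'I_k -> 'I_k) :
  {homo f : i j / (i < j)%N >-> (i < j)%N} -> f =1 id.
Proof.
move=> incr.
have le_f m (i : 'I_k) : i = m :> nat -> (m <= f i)%N.
  elim: m i => // m IH i im; have ltmk : (m < k)%N by have := ltn_ord i; lia.
  by apply: leq_ltn_trans (IH (Ordinal ltmk) erefl) (incr _ _ _); rewrite im.
have ge_f m (i : 'I_k) : (k - i = m.+1)%N -> (f i <= i)%N.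
  elim: m i => [|m IH] i im; first by have := ltn_ord (f i); lia.
  have lt1k : (i.+1 < k)%N by lia.
  have IHi1 : (f (Ordinal lt1k) <= i.+1)%N by apply: IH => /=; lia.
  by have := incr i (Ordinal lt1k) (ltnSn i); lia.
move=> i; apply: val_inj; apply/eqP; rewrite eqn_leq (le_f i i) // andbT.
by apply: (ge_f (k - i).-1); have := ltn_ord i; lia.
Qed.

Section ThreeMinors.
Variables (K : fieldType) (p : nat).
Hypothesis p_ge3 : (3 <= p)%N.
Local Notation n := (2 * p)%N.
Local Notation P := {mpoly K[n]}.
Local Notation I := 'I_p.-1.
Local Notation x := (x K p).
Local Notation y := (y K p).
Local Notation a := (a K p).
Local Notation b := (b K p).
Local Notation I2 := (@I2 K p).
Local Notation xy_minor := (xy_minor K p).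
Local Notation mixed_minor := (mixed_minor K p).
Local Notation wsum := (@wsum K p).
Local Notation I2_mixed := (@I2_mixed K p).

Definition top j : P := Mcol K p (inord 0) j.
Definition red1 j : P := Mcol K p (inord 1) j - a * top j.
Definition red2 j : P := Mcol K p (inord 2) j - b * top j.
Definition red_minor j k : P := red1 j * red2 k - red1 k * red2 j.

Lemma col_first : [/\ top 0 = 1, red1 0 = 0 & red2 0 = 0].
Proof. by rewrite /red1 /red2 /top /Mcol /a /b /= !inordK //= !mulr1 !subrr. Qed.

Lemma col_odd s :
  [/\ top (s.*2).+1 = x s, red1 (s.*2).+1 = y s - a * x s & red2 (s.*2).+1 = - (b * x s)].
Proof.
by rewrite /red1 /red2 /top /Mcol /= !inordK //= odd_double /= doubleK sub0r.
Qed.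

Lemma col_even s : [/\ top (s.*2).+2 = 0, red1 (s.*2).+2 = x s & red2 (s.*2).+2 = y s].
Proof. by rewrite /red1 /red2 /top /Mcol /= !inordK //= odd_double /= doubleK !mulr0 !subr0. Qed.

Variant col_spec : nat -> Type :=
  | ColFirst : col_spec 0
  | ColOdd (s : I) : col_spec (s.*2).+1
  | ColEven (s : I) : col_spec (s.*2).+2.

Lemma colP j : (j < n.-1)%N -> col_spec j.
Proof.
move=> ltj; case: (posnP j) => [->|j_gt0]; first exact: ColFirst.
rewrite -[j]odd_double_half; case: (boolP (odd j)) => oj /=.
  have lts : (j./2 < p.-1)%N by move: ltj; rewrite -[j]odd_double_half oj -mul2n; lia.
  exact: (ColOdd (Ordinal lts)).
have lts : (j./2.-1 < p.-1)%N by move: ltj; rewrite -[j]odd_double_half (negbTE oj) -mul2n; lia.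
have -> : j./2.*2 = ((Ordinal lts).*2).+2 :> nat.
  by move: j_gt0; rewrite /= -[j]odd_double_half (negbTE oj) -!mul2n; lia.
exact: ColEven.
Qed.

Lemma red_minor_first_l k : red_minor 0 k = 0.
Proof. by rewrite /red_minor; case: col_first => _ -> ->; rewrite !(mul0r, mulr0) subrr. Qed.

Lemma red_minor_first_r j : red_minor j 0 = 0.
Proof. by rewrite /red_minor; case: col_first => _ -> ->; rewrite !(mul0r, mulr0) subrr. Qed.

Lemma red_minor_odd_odd s t : red_minor (s.*2).+1 (t.*2).+1 = b * xy_minor s t.
Proof.
rewrite /red_minor; case: (col_odd s) (col_odd t) => _ -> -> [_ -> ->].
by rewrite /xy_minor; ring.
Qed.

Lemma red_minor_odd_even s t : red_minor (s.*2).+1 (t.*2).+2 = mixed_minor s t.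
Proof.
rewrite /red_minor; case: (col_odd s) (col_even t) => _ -> -> [_ -> ->].
by rewrite /mixed_minor /cubic_tail; ring.
Qed.

Lemma red_minor_even_odd s t : red_minor (s.*2).+2 (t.*2).+1 = - mixed_minor t s.
Proof.
rewrite /red_minor; case: (col_even s) (col_odd t) => _ -> -> [_ -> ->].
by rewrite /mixed_minor /cubic_tail; ring.
Qed.

Lemma red_minor_even_even s t : red_minor (s.*2).+2 (t.*2).+2 = xy_minor s t.
Proof. by rewrite /red_minor; case: (col_even s) (col_even t) => _ -> -> [_ -> ->]. Qed.

Lemma red_minor_I2_mixed j k : (j < n.-1)%N -> (k < n.-1)%N -> I2_mixed (red_minor j k).
Proof.
have idJ := I2_mixed_ideal K p.
move=> /colP[|s|s] /colP[|t|t];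
  rewrite ?red_minor_first_l ?red_minor_first_r ?red_minor_odd_odd ?red_minor_odd_even
    ?red_minor_even_odd ?red_minor_even_even.
all: try exact: (is_ideal0 idJ).
- exact/(is_idealMl idJ)/I2_sub_I2_mixed/xy_minor_I2.
- exact: mixed_minor_I2_mixed.
- exact/(is_idealN idJ)/mixed_minor_I2_mixed.
- exact/I2_sub_I2_mixed/xy_minor_I2.
Qed.

Lemma det_bigM_minor (f : 'I_3 -> 'I_3) (g : 'I_3 -> 'I_n.-1) :
  {homo f : i j / (i < j)%N >-> (i < j)%N} ->
  \det (mxsub f g (bigM K p)) =
    top (g (inord 0)) * red_minor (g (inord 1)) (g (inord 2))
  - top (g (inord 1)) * red_minor (g (inord 0)) (g (inord 2))
  + top (g (inord 2)) * red_minor (g (inord 0)) (g (inord 1)).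
Proof.
move=> /incr_ord_id f_id.
have -> : mxsub f g (bigM K p) = \matrix_(i < 3, j < 3) Mcol K p (inord i) (g (inord j)).
  by apply/matrixP => i j; rewrite !mxE f_id !inord_val.
rewrite (det_mx3 (fun i j => Mcol K p (inord i) (g (inord j)))).
by rewrite /red_minor /red1 /red2 /top; ring.
Qed.

Lemma minors3_I2_mixed h : minors_ideal 3 (bigM K p) h -> I2_mixed h.
Proof.
have idJ := I2_mixed_ideal K p; apply: (ideal_gen_min idJ) => _ [f [g [incr_f _ ->]]].
rewrite det_bigM_minor //; apply: (is_idealD idJ); first apply: (is_idealB idJ).
all: by apply/(is_idealMl idJ)/red_minor_I2_mixed.
Qed.

End ThreeMinors.

Section Corollary.
Variables (K : fieldType) (p : nat).
Hypothesis p_ge3 : (3 <= p)%N.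
Local Notation n := (2 * p)%N.
Local Notation I := 'I_p.-1.
Local Notation y := (y K p).
Local Notation xy_minor := (xy_minor K p).
Local Notation mixed_minor := (mixed_minor K p).
Local Notation red_minor := (red_minor K p).
Local Notation lhs := (initial_ideal (minors_ideal 3 (bigM K p))).
Local Notation rhs := (ideal_add (minors_ideal 2 (smallN K p))
                                 (ideal_mul (linideal K p) (linideal K p))).

Lemma rhs_ideal : is_ideal rhs. Proof. exact: ideal_gen_ideal. Qed.

Lemma lhs_ideal : is_ideal lhs. Proof. exact: ideal_gen_ideal. Qed.

Lemma det_smallN_minor (f : 'I_2 -> 'I_2) (g : 'I_2 -> I) :
  {homo f : i j / (i < j)%N >-> (i < j)%N} ->
  \det (mxsub f g (smallN K p)) = xy_minor (g (inord 0)) (g (inord 1)).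
Proof.
move=> /incr_ord_id f_id.
pose F i j := if i == 0%N then @e K n (g (inord j)).+1 else @e K n (p + (g (inord j)).+1).
have -> : mxsub f g (smallN K p) = \matrix_(i < 2, j < 2) F i j.
  by apply/matrixP => i j; rewrite !mxE f_id /F !inord_val.
by rewrite (det_mx2 F).
Qed.

Lemma xy_minor_rhs (s t : I) : rhs (xy_minor s t).
Proof.
wlog lt_st : s t / (s < t)%N.
  move=> lt_rhs; case: (ltngtP s t) => [|gt_st|/val_inj ->]; first exact: lt_rhs.
    have -> : xy_minor s t = - xy_minor t s by rewrite /xy_minor; ring.
    exact/(is_idealN rhs_ideal)/lt_rhs.
  by rewrite /xy_minor subrr; apply: (is_ideal0 rhs_ideal).
apply/mem_ideal_gen; left; apply: mem_ideal_gen.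
exists id, (fun i : 'I_2 => if val i == 0%N then s else t); split => //.
  by move=> [[|[|?]] ?] [[|[|?]] ?].
by rewrite det_smallN_minor //= !inordK.
Qed.

Lemma ysq_rhs (s t : I) : rhs (y s * y t).
Proof.
apply/mem_ideal_gen; right; apply: mem_ideal_gen.
by exists (y s), (y t); split => //; apply: mem_ideal_gen; [exists s | exists t].
Qed.

Lemma lhs_sub_rhs h : lhs h -> rhs h.
Proof.
apply: (ideal_gen_min rhs_ideal) => _ [f [minor_f _ ->]].
have := initf_I2_mixed p_ge3 (minors3_I2_mixed p_ge3 minor_f).
apply: (ideal_gen_min rhs_ideal) => _ [[s [t ->]]|[s [t ->]]].
  exact: xy_minor_rhs.
exact: ysq_rhs.
Qed.

Lemma red_minor_lhs c1 c2 : (0 < c1 < c2)%N -> (c2 < n.-1)%N ->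
  lhs (initf (red_minor c1 c2)).
Proof.
move=> lt_c lt_c2; have [->|nz] := eqVneq (red_minor c1 c2) 0.
  by rewrite initf0; apply: (is_ideal0 lhs_ideal).
have n1_gt0 : (0 < n.-1)%N by lia.
pose g (i : 'I_3) : 'I_n.-1 :=
  insubd (Ordinal n1_gt0) (if val i == 0%N then 0%N else if val i == 1%N then c1 else c2).
have val_g (i : 'I_3) : val (g i) = if val i == 0%N then 0%N else if val i == 1%N then c1 else c2.
  by rewrite val_insubd ifT //; do 2 case: ifP => _ //; lia.
apply: mem_ideal_gen; exists (red_minor c1 c2); split => //.
apply: mem_ideal_gen; exists id, g; split => //.
  move=> i j; rewrite !val_g.
  by case: i j => [[|[|[|?]]] ?] [[|[|[|?]]] ?] //=; lia.
rewrite det_bigM_minor // !val_g /= !inordK //=.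
by case: (col_first K p) => -> _ _; rewrite !red_minor_first_l; ring.
Qed.

Lemma initf_mixed_minor (s t : I) : initf (mixed_minor s t) = y s * y t.
Proof.
apply: initf_homog_sum; [exact: ysq_homog | | exact: cubic_tail_vanish].
by rewrite !(yE K p_ge3) -mpolyXD mpolyX_neq0.
Qed.

Lemma ysq_lhs (s t : I) : lhs (y s * y t).
Proof.
wlog le_st : s t / (s <= t)%N.
  by move=> ysq; case: (leqP s t) => [|/ltnW] /ysq //; rewrite mulrC.
rewrite -initf_mixed_minor -red_minor_odd_even.
by apply: red_minor_lhs; rewrite -!mul2n; have := ltn_ord t; lia.
Qed.

Lemma xy_minor_lhs (s t : I) : (s < t)%N -> lhs (xy_minor s t).
Proof.
move=> lt_st; rewrite -(initf_homog (xy_minor_homog K p s t)) -red_minor_even_even.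
by apply: red_minor_lhs; rewrite -!mul2n; have := ltn_ord t; lia.
Qed.

Lemma rhs_sub_lhs h : rhs h -> lhs h.
Proof.
apply: (ideal_gen_min lhs_ideal) => u [minor_u|prod_u].
  apply: (ideal_gen_min lhs_ideal _ minor_u) => _ [f [g [incr_f incr_g ->]]].
  by rewrite det_smallN_minor //; apply/xy_minor_lhs/incr_g; rewrite !inordK.
by apply: (ideal_mul_min lhs_ideal _ prod_u) => _ _ [s ->] [t ->]; apply: ysq_lhs.
Qed.

End Corollary.

Theorem corollary7p2 (K : fieldType) (p : nat) (hp : (3 <= p)%N) :
  ideal_eq
    (initial_ideal (minors_ideal 3 (bigM K p)))
    (ideal_add (minors_ideal 2 (smallN K p))
               (ideal_mul (linideal K p) (linideal K p))).
Proof. by move=> h; split; [apply: lhs_sub_rhs | apply: rhs_sub_lhs]. Qed.
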